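(* For the modular data of the quantum double of $S_3$, each of the trace one modular invariants $Z_{25},Z_{52},Z_{34},Z_{43}$ has, up to equivalence, exactly one matching nimrep.
   Context: Primaries $0,\dots,7$, all self-conjugate, with $S=\frac16\begin{pmatrix}1&1&2&2&2&2&3&3\\1&1&2&2&2&2&-3&-3\\2&2&4&-2&-2&-2&0&0\\2&2&-2&4&-2&-2&0&0\\2&2&-2&-2&-2&4&0&0\\2&2&-2&-2&4&-2&0&0\\3&-3&0&0&0&0&3&-3\\3&-3&0&0&0&0&-3&3\end{pmatrix}$, fusion coefficients $N_{\lambda\mu}^\nu=\sum_\rho S_{\lambda\rho}S_{\mu\rho}\overline{S_{\nu\rho}}/S_{0\rho}$. With linear forms $s_2=\chi_0+\chi_1+2\chi_2$, $s_3=\chi_0+\chi_1+2\chi_3$, $s_4=\chi_0+\chi_2+\chi_6$, $s_5=\chi_0+\chi_3+\chi_6$ (identified with their coefficient vectors $(a_\lambda)_{\lambda=0}^7$), $Z_{ij}=s_is_j^*$ is the matrix $(a^{(i)}_\lambda a^{(j)}_\mu)_{\lambda,\mu}$. A nimrep of dimension $n$: non-negative integer $n\times n$ matrices $G_\lambda$ with $G_0=I$, $G_{\bar\lambda}=G_\lambda^t$, $G_\lambda G_\mu=\sum_\nu N_{\lambda\mu}^\nu G_\nu$; two nimreps $G',G''$ are equivalent if $PG'_\lambda P^{-1}=G''_\lambda$ for all $\lambda$ for some permutation matrix $P$. $\mathrm{Exp}(Z)$ is the multiset with $Z_{\mu\mu}$ copies of $\mu$. A nimrep matches $Z$ if $n=\mathrm{Tr}\,Z$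 and the $G_\lambda$ are simultaneously unitarily diagonalisable with joint eigenvalues $(S_{\lambda\mu}/S_{0\mu})_\lambda$, $\mu$ running through $\mathrm{Exp}(Z)$ with multiplicity. *)

From HB Require Import structures.
From mathcomp Require Import all_boot all_order all_algebra all_fingroup all_field.
From mathcomp Require Export spectral.

Set Implicit Arguments.
Unset Strict Implicit.
Unset Printing Implicit Defensive.

Import Order.TTheory GRing.Theory Num.Theory.
Local Open Scope ring_scope.
Local Open Scope sesquilinear_scope.

(* Integer numerators of 6*S, primaries indexed by 'I_8 *)
Definition S6 (l m : nat) : int :=
  nth 0 (nth [::] [::
    [:: 1; 1;  2;  2;  2;  2;  3;  3];
    [:: 1; 1;  2;  2;  2;  2; -3; -3];
    [:: 2; 2;  4; -2; -2; -2;  0;  0];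
    [:: 2; 2; -2;  4; -2; -2;  0;  0];
    [:: 2; 2; -2; -2; -2;  4;  0;  0];
    [:: 2; 2; -2; -2;  4; -2;  0;  0];
    [:: 3; -3; 0;  0;  0;  0;  3; -3];
    [:: 3; -3; 0;  0;  0;  0; -3;  3]]%Z l) m.

Definition Smx : 'M[algC]_8 := \matrix_(l < 8, m < 8) ((S6 l m)%:~R / 6%:R).

Definition cconj (l : 'I_8) : 'I_8 := l.

(* Fusion coefficients via the Verlinde formula *)
Definition Nfus (l m n : 'I_8) : algC :=
  \sum_(r < 8) Smx l r * Smx m r * (Smx n r)^* / Smx 0 r.

Definition nimrep (n : nat) (G : 'I_8 -> 'M[nat]_n) : Prop :=
  let Gc := fun l => map_mx (fun k : nat => (k%:R : algC)) (G l) in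
  [/\ G 0 = 1%:M,
      forall l, G (cconj l) = (G l)^T &
      forall l m, Gc l *m Gc m = \sum_(k < 8) Nfus l m k *: Gc k].

Definition nimrep_equiv (n : nat) (G1 G2 : 'I_8 -> 'M[nat]_n) : Prop :=
  exists s : 'S_n, forall l,
    let P : 'M[algC]_n := perm_mx s in
    P *m map_mx (fun k : nat => (k%:R : algC)) (G1 l) *m invmx P
      = map_mx (fun k : nat => (k%:R : algC)) (G2 l).

(* Linear forms, as coefficient vectors *)
Definition vec_of (s : seq nat) : 'I_8 -> nat := fun l => nth 0%N s l.
Definition s2 := vec_of [:: 1; 1; 2; 0; 0; 0; 0; 0]%N.
Definition s3 := vec_of [:: 1; 1; 0; 2; 0; 0; 0; 0]%N.
Definition s4 := vec_of [:: 1; 0; 1; 0; 0; 0; 1; 0]%N.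
Definition s5 := vec_of [:: 1; 0; 0; 1; 0; 0; 1; 0]%N.

Definition Zmx (a b : 'I_8 -> nat) : 'M[nat]_8 :=
  \matrix_(l < 8, m < 8) (a l * b m)%N.

Definition trZ (Z : 'M[nat]_8) : nat := (\sum_(l < 8) Z l l)%N.

(* G matches Z: n = Tr Z, and the G_l are simultaneously unitarily
   diagonalisable with joint eigenvalues (S_{l mu}/S_{0 mu})_l, mu running
   over Exp(Z) with multiplicity (encoded by e : 'I_n -> 'I_8 taking each
   mu exactly Z_{mu mu} times). *)
Definition matches (Z : 'M[nat]_8) (n : nat) (G : 'I_8 -> 'M[nat]_n) : Prop :=
  n = trZ Z /\
  exists (U : 'M[algC]_n) (e : 'I_n -> 'I_8),
    [/\ U \is unitarymx,
        forall mu, #|[set i | e i == mu]| = Z mu mu &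
        forall l, map_mx (fun k : nat => (k%:R : algC)) (G l) =
          U^t* *m diag_mx (\row_i (Smx l (e i) / Smx 0 (e i))) *m U].

Definition unique_matching_nimrep (Z : 'M[nat]_8) : Prop :=
  exists G : 'I_8 -> 'M[nat]_(trZ Z),
    [/\ nimrep G, matches Z G &
        forall G' : 'I_8 -> 'M[nat]_(trZ Z),
          nimrep G' -> matches Z G' -> nimrep_equiv G G'].

(** A matching nimrep has dimension [Tr Z = 1], and a trace one invariant has
    [Exp(Z) = {0}], so the unique joint eigenvalue is [(S_{l0}/S_{00})_l]: a
    matching nimrep must be [G_l = d_l], the quantum dimensions, and it is
    unique on the nose.  Conversely [l |-> d_l] is a nimrep because the
    quantum dimensions form a one-dimensional representation of the fusion
    rules, which follows from the Verlinde formula and the orthogonality of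
    the columns of [S]. *)
From mathcomp Require Import all_boot all_order all_algebra all_fingroup all_field.
From mathcomp Require Import ring.
Import Order.TTheory GRing.Theory Num.Theory.
Local Open Scope ring_scope.
Local Open Scope sesquilinear_scope.

Definition qdim (l : 'I_8) : nat := nth 0%N [:: 1; 1; 2; 2; 2; 2; 3; 3]%N l.

Lemma conj_Smx l r : (Smx l r)^* = Smx l r.
Proof. by rewrite mxE fmorph_div rmorph_int rmorph_nat. Qed.

Lemma Smx00_neq0 : Smx 0 0 != 0.
Proof. by rewrite mxE /= mul1r invr_eq0 pnatr_eq0. Qed.

Lemma qdimE l : (qdim l)%:R = Smx l 0 / Smx 0 0 :> algC.
Proof.
rewrite !mxE /= mul1r invrK divfK ?pnatr_eq0 //.
by case: l => -[|[|[|[|[|[|[|[|]]]]]]]].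
Qed.

Lemma S6_orthogonal_col0 (r : 'I_8) :
  \sum_(k < 8) S6 k r * S6 k 0 = 36 * (r == 0 :> nat)%:Z.
Proof. by rewrite !big_ord_recl big_ord0; case: r => -[|[|[|[|[|[|[|[|]]]]]]]]. Qed.

Lemma Smx_orthogonal_col0 (r : 'I_8) :
  \sum_(k < 8) Smx k r * Smx k 0 = (r == 0 :> nat)%:R.
Proof.
have nz6 : 6%:R != 0 :> algC by rewrite pnatr_eq0.
transitivity (\sum_(k < 8) (S6 k r * S6 k 0)%:~R / 36 : algC).
  by apply: eq_bigr => k _; rewrite !mxE rmorphM /= mulrACA -invfM -natrM.
rewrite -mulr_suml -rmorph_sum /= S6_orthogonal_col0 rmorphM /= mulrC mulKf //.
by rewrite pnatr_eq0.
Qed.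

Lemma qdim_fusion (l m : 'I_8) :
  (qdim l)%:R * (qdim m)%:R = \sum_(k < 8) Nfus l m k * (qdim k)%:R :> algC.
Proof.
have -> : \sum_(k < 8) Nfus l m k * (qdim k)%:R = \sum_(r < 8)
    Smx l r * Smx m r / Smx 0 r / Smx 0 0 * \sum_(k < 8) Smx k r * Smx k 0.
  under [RHS]eq_bigr => r _ do rewrite mulr_sumr.
  rewrite exchange_big /=; apply: eq_bigr => k _.
  rewrite /Nfus qdimE mulr_suml; apply: eq_bigr => r _.
  by rewrite conj_Smx; ring.
under eq_bigr => r _ do rewrite Smx_orthogonal_col0.
rewrite (bigD1 ord0) //= big1 => [|r /negbTE r_neq0]; last first.
  by rewrite -val_eqE /= in r_neq0; rewrite r_neq0 mulr0.
have := Smx00_neq0; rewrite mulr1 addr0 !qdimE => ?.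
by field.
Qed.

Lemma unitary_conj_scalar n (U : 'M[algC]_n) (a : algC) :
  U \is unitarymx -> U^t* *m a%:M *m U = a%:M.
Proof. by move=> U_unitary; rewrite scalar_mxC mulmxKtV. Qed.

Lemma eq_nimrep_equiv n (G1 G2 : 'I_8 -> 'M[nat]_n) :
  (forall l, map_mx (fun k : nat => k%:R : algC) (G1 l) =
             map_mx (fun k : nat => k%:R : algC) (G2 l)) ->
  nimrep_equiv G1 G2.
Proof.
by move=> eqG; exists 1%g => l /=; rewrite perm_mx1 invmx1 mul1mx mulmx1 eqG.
Qed.

Definition qdim_rep (l : 'I_8) : 'M[nat]_1 := (qdim l)%:M.

Lemma qdim_rep_nimrep : nimrep qdim_rep.
Proof.
split=> [|l|l m]; first by apply/matrixP => i j; rewrite !ord1 !mxE.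
  by apply/matrixP => i j; rewrite !ord1 !mxE.
apply/matrixP => i j; rewrite !ord1 !mxE big_ord1 !mxE summxE qdim_fusion.
by apply: eq_bigr => k _; rewrite !mxE.
Qed.

Section TraceOne.

Variable Z : 'M[nat]_8.
Hypothesis Z_diag : forall mu, Z mu mu = (mu == 0).

Lemma trZ_eq1 : trZ Z = 1%N.
Proof. by rewrite /trZ big_ord_recl Z_diag big1 // => i _; rewrite Z_diag. Qed.

Lemma matches_eq_qdim (G : 'I_8 -> 'M[nat]_1) l :
  matches Z G -> map_mx (fun k : nat => k%:R : algC) (G l) = (qdim l)%:R%:M.
Proof.
move=> [_ [U [e [U_unitary card_e ->]]]].
have e0 i : e i = 0.
  have : (0 < #|[set j | e j == e i]|)%N by apply/card_gt0P; exists i; rewrite inE.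
  by rewrite card_e Z_diag lt0b => /eqP.
have -> : diag_mx (\row_i (Smx l (e i) / Smx 0 (e i))) = (qdim l)%:R%:M.
  by apply/matrixP => i j; rewrite qdimE !ord1 !mxE e0.
exact: unitary_conj_scalar.
Qed.

Lemma qdim_rep_matches : matches Z qdim_rep.
Proof.
split; first by rewrite trZ_eq1.
exists 1%:M, (fun _ => 0); split.
- apply/unitarymxP; apply/matrixP => i j.
  by rewrite !ord1 !mxE big_ord1 !mxE /= conjC1 mulr1.
- move=> mu; rewrite Z_diag [mu == 0]eq_sym; case: (0 == mu).
    by rewrite -[RHS](card_ord 1); apply: eq_card => i; rewrite inE.
  by apply/eqP; rewrite cards_eq0; apply/eqP/setP => i; rewrite !inE.
- move=> l; rewrite trmx1 map_mx1 mul1mx mulmx1 -qdimE.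
  by apply/matrixP => i j; rewrite !ord1 !mxE.
Qed.

Lemma trace_one_unique_matching_nimrep : unique_matching_nimrep Z.
Proof.
rewrite /unique_matching_nimrep; move: qdim_rep_matches matches_eq_qdim.
(* [trZ Z] occurs as a matrix dimension, so it is generalized, not rewritten. *)
move: (trZ Z) trZ_eq1 => _ -> matches_qdim matches_G.
exists qdim_rep; split=> [||G _ matchesG] //; first exact: qdim_rep_nimrep.
apply: eq_nimrep_equiv => l.
by rewrite (matches_G _ _ matches_qdim) (matches_G _ _ matchesG).
Qed.

End TraceOne.

Theorem proposition6p3 :
  [/\ unique_matching_nimrep (Zmx s2 s5),
      unique_matching_nimrep (Zmx s5 s2),
      unique_matching_nimrep (Zmx s3 s4) &
      unique_matching_nimrep (Zmx s4 s3)].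
Proof.
split; apply: trace_one_unique_matching_nimrep => mu; rewrite mxE;
  by case: mu => -[|[|[|[|[|[|[|[|]]]]]]]].
Qed.
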